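(* Let $f:\mathbb{R}\to\mathbb{R}$ be twice continuously differentiable, and let $u_L<u_U$ with $f''>0$ on $(u_L,u_U)$ or $f''<0$ on $(u_L,u_U)$. Let $x_1<x_2=x_3<x_4$, $u_1,\dots,u_4\in[u_L,u_U]$, and let $u_{23}$ be a value in the closed interval with endpoints $u_2,u_3$ satisfying $$(x_2-x_1)\,a(u_1,u_{23})+(x_4-x_2)\,a(u_{23},u_4)=(x_2-x_1)\,a(u_1,u_2)+(x_4-x_3)\,a(u_3,u_4).$$ If particles 2 and 3 are replaced by the single particle $(x_2,u_{23})$, then the total variation of the particle values does not increase: $|u_{23}-u_1|+|u_4-u_{23}|\le |u_2-u_1|+|u_3-u_2|+|u_4-u_3|$.
   Context: For $g:\mathbb{R}\to\mathbb{R}$ write $[g(u)]_{a}^{b}=g(b)-g(a)$. For $u_1\neq u_2$ the nonlinear average is $a(u_1,u_2)=\frac{[f'(u)u-f(u)]_{u_1}^{u_2}}{[f'(u)]_{u_1}^{u_2}}=\frac{\int_{u_1}^{u_2}f''(u)u\,\mathrm{d}u}{\int_{u_1}^{u_2}f''(u)\,\mathrm{d}u}$, and $a(u,u)=u$. The total variation of a particle sequence with values $v_1,\dots,v_n$ (ordered by position) is $\sum_i|v_{i+1}-v_i|$; this equals the total variation of the monotone-between-particles interpolant used in the method. *)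

From Stdlib Require Import Reals.
From Coquelicot Require Import Coquelicot.
Open Scope R_scope.

Definition C2 (f : R -> R) : Prop :=
  forall x : R, ex_derive f x /\ ex_derive (Derive f) x /\
                continuous (Derive (Derive f)) x.

Definition nl_avg (f : R -> R) (u1 u2 : R) : R :=
  if Req_EM_T u1 u2 then u1
  else ((Derive f u2 * u2 - f u2) - (Derive f u1 * u1 - f u1))
       / (Derive f u2 - Derive f u1).

From Stdlib Require Import Reals Lra.
From Coquelicot Require Import Coquelicot.
Open Scope R_scope.

(* Only the position of u23 between u2 and u3 matters: the path u1 -> u23 -> u4
   is dominated by u1 -> u2 -> u23 -> u3 -> u4 (triangle inequality), and the
   two middle legs together measure exactly |u3 - u2|.  The smoothness,
   convexity and conservation hypotheses are what guarantee, in the paper,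
   that such a u23 exists; here it is given. *)

Lemma Rabs_split_between (a b c : R) :
  Rmin a b <= c <= Rmax a b -> Rabs (c - a) + Rabs (b - c) = Rabs (b - a).
Proof.
  unfold Rmin, Rmax; intros [Hlo Hhi].
  destruct (Rle_dec a b); unfold Rabs; repeat destruct Rcase_abs; lra.
Qed.

Lemma total_variation_merge_between (u1 u2 u3 u4 w : R) :
  Rmin u2 u3 <= w <= Rmax u2 u3 ->
  Rabs (w - u1) + Rabs (u4 - w)
    <= Rabs (u2 - u1) + Rabs (u3 - u2) + Rabs (u4 - u3).
Proof.
  intros Hw.
  pose proof (Rabs_split_between u2 u3 w Hw) as Hsplit.
  assert (Hleft : Rabs (w - u1) <= Rabs (u2 - u1) + Rabs (w - u2)).
  { replace (w - u1) with ((u2 - u1) + (w - u2)) by ring; apply Rabs_triang. }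
  assert (Hright : Rabs (u4 - w) <= Rabs (u3 - w) + Rabs (u4 - u3)).
  { replace (u4 - w) with ((u3 - w) + (u4 - u3)) by ring; apply Rabs_triang. }
  lra.
Qed.

Theorem corollary1 (f : R -> R) (uL uU : R)
  (x1 x2 x3 x4 u1 u2 u3 u4 u23 : R) :
  C2 f ->
  uL < uU ->
  ((forall x, uL < x < uU -> Derive (Derive f) x > 0) \/
   (forall x, uL < x < uU -> Derive (Derive f) x < 0)) ->
  x1 < x2 -> x2 = x3 -> x3 < x4 ->
  uL <= u1 <= uU -> uL <= u2 <= uU -> uL <= u3 <= uU -> uL <= u4 <= uU ->
  Rmin u2 u3 <= u23 <= Rmax u2 u3 ->
  (x2 - x1) * nl_avg f u1 u23 + (x4 - x2) * nl_avg f u23 u4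
    = (x2 - x1) * nl_avg f u1 u2 + (x4 - x3) * nl_avg f u3 u4 ->
  Rabs (u23 - u1) + Rabs (u4 - u23)
    <= Rabs (u2 - u1) + Rabs (u3 - u2) + Rabs (u4 - u3).
Proof.
  intros _ _ _ _ _ _ _ _ _ _ Hu23 _.
  exact (total_variation_merge_between u1 u2 u3 u4 u23 Hu23).
Qed.
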